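(* Let $p_1,p_2\in\mathbb{R}^3$ be distinct points and let $\pi_1,\pi_2\subset\mathbb{R}^3$ be two distinct affine $2$-planes, both containing $p_1$ and $p_2$ and neither passing through the origin $O$. For $p_3\in\pi_1\setminus\pi_2$ and $p_4\in\pi_2\setminus\pi_1$ set \[ \omega(p_1,p_2;p_3,p_4)=\frac{\det(p_2-p_1,\,p_3-p_1,\,p_4-p_1)}{\det(p_1,p_2,p_3)\,\det(p_1,p_2,p_4)} . \] Then the value $\omega(p_1,p_2;p_3,p_4)$ does not depend on the choice of $p_3\in\pi_1\setminus\pi_2$ and $p_4\in\pi_2\setminus\pi_1$.
   Context: Points of $\mathbb{R}^3$ are identified with their coordinate vectors, and $\det(u,v,w)$ denotes the determinant of the $3\times 3$ matrix with columns $u,v,w$. For points $p_1,p_2,p_3,p_4$ such that ${\rm span}(p_1,p_2,p_3)$ and ${\rm span}(p_1,p_2,p_4)$ (minimal affine subspaces containing the points) are $2$-dimensional and do not contain $O$, the quantity $\omega(p_1,p_2;p_3,p_4)$ above is called the projective lifting coefficient on $p_1p_2$ induced by these two planes. *)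

From mathcomp Require Import all_boot all_order all_algebra.
Set Implicit Arguments. Unset Strict Implicit. Unset Printing Implicit Defensive.
Import Order.TTheory GRing.Theory Num.Theory.
Local Open Scope ring_scope.

Definition det3 (R : comNzRingType) (u v w : 'rV[R]_3) : R :=
  \det (\matrix_(i < 3, j < 3)
          (if j == 0 :> nat then u 0 i
           else if j == 1 :> nat then v 0 i else w 0 i)).

Definition dot3 (R : comNzRingType) (n x : 'rV[R]_3) : R := \sum_(i < 3) n 0 i * x 0 i.

(* The affine 2-plane { x | n . x = c } (an affine 2-plane when n != 0). *)
Definition plane (R : comNzRingType) (n : 'rV[R]_3) (c : R) (x : 'rV[R]_3) : Prop :=
  dot3 n x = c.

Definition omega (R : fieldType) (p1 p2 p3 p4 : 'rV[R]_3) : R :=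
  det3 (p2 - p1) (p3 - p1) (p4 - p1) / (det3 p1 p2 p3 * det3 p1 p2 p4).

From mathcomp Require Import all_boot all_order all_algebra.
From mathcomp Require Import ring.
Import Order.TTheory GRing.Theory Num.Theory.
Local Open Scope ring_scope.
Set Implicit Arguments. Unset Strict Implicit.

(* If q3 lies in pi1 but not in pi2, then q3 - p1 = l (p3 - p1) + mu (p2 - p1)
   with l <> 0: subtracting the right multiple of p3 - p1 leaves a vector
   orthogonal to both normals, hence parallel to their cross product and so to
   the direction p2 - p1 of the line pi1 /\ pi2.  Likewise
   q4 - p1 = l' (p4 - p1) + mu' (p2 - p1).  By multilinearity and alternation
   of the determinant, the numerator of omega gets multiplied by l l' and the
   two factors of its denominator by l and l', so omega does not change. *)

Definition cross3 (R : comNzRingType) (u v : 'rV[R]_3) : 'rV[R]_3 :=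
  \row_(i < 3) (if i == 0 :> nat then u 0 1 * v 0 2 - u 0 2 * v 0 1
                else if i == 1 :> nat then u 0 2 * v 0 0 - u 0 0 * v 0 2
                else u 0 0 * v 0 1 - u 0 1 * v 0 0).

Section Coordinates.
Variable R : comNzRingType.
Implicit Types u v w : 'rV[R]_3.

Lemma row3_eq u v : u 0 0 = v 0 0 -> u 0 1 = v 0 1 -> u 0 2 = v 0 2 -> u = v.
Proof.
move=> e0 e1 e2; apply/rowP => -[[|[|[|k]]] lt_k3] //.
- by rewrite (_ : Ordinal lt_k3 = 0) //; apply: val_inj.
- by rewrite (_ : Ordinal lt_k3 = 1) //; apply: val_inj.
- by rewrite (_ : Ordinal lt_k3 = 2) //; apply: val_inj.
Qed.

Lemma dot3E u v : dot3 u v = u 0 0 * v 0 0 + u 0 1 * v 0 1 + u 0 2 * v 0 2.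
Proof.
rewrite /dot3 !big_ord_recl big_ord0 addr0 addrA.
have -> : lift 0 0 = 1 :> 'I_3 by apply/val_inj.
by have -> : lift 0 (lift 0 0) = 2 :> 'I_3 by apply/val_inj.
Qed.

Lemma det3E u v w :
  det3 u v w = u 0 0 * (v 0 1 * w 0 2 - v 0 2 * w 0 1)
             - v 0 0 * (u 0 1 * w 0 2 - u 0 2 * w 0 1)
             + w 0 0 * (u 0 1 * v 0 2 - u 0 2 * v 0 1).
Proof.
rewrite /det3 (expand_det_row _ 0) !big_ord_recl big_ord0 /cofactor.
rewrite !(expand_det_row _ 0) !big_ord_recl !big_ord0 /cofactor.
rewrite !det_mx11 !mxE /=.
have -> : lift 0 0 = 1 :> 'I_3 by apply/val_inj.
have -> : lift 0 (lift 0 0) = 2 :> 'I_3 by apply/val_inj.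
rewrite /bump /=; ring.
Qed.

Lemma dot3C u v : dot3 u v = dot3 v u.
Proof. by apply: eq_bigr => i _; rewrite mulrC. Qed.

Lemma dot3B u v w : dot3 u (v - w) = dot3 u v - dot3 u w.
Proof. by rewrite /dot3 -sumrB; apply: eq_bigr => i _; rewrite !mxE mulrBr. Qed.

Lemma dot3Z (k : R) u v : dot3 u (k *: v) = k * dot3 u v.
Proof. by rewrite /dot3 mulr_sumr; apply: eq_bigr => i _; rewrite !mxE mulrCA. Qed.

Lemma dot3Zl (k : R) u v : dot3 (k *: u) v = k * dot3 u v.
Proof. by rewrite dot3C dot3Z dot3C. Qed.

Lemma cross3_0l v : cross3 0 v = 0.
Proof. by apply: row3_eq; rewrite !mxE /= !mul0r subrr. Qed.

Lemma cross3_crossl u v w :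
  cross3 (cross3 u v) w = dot3 u w *: v - dot3 v w *: u.
Proof. by apply: row3_eq; rewrite !mxE /= !dot3E; ring. Qed.

Lemma cross3_eq0_parallel u v : cross3 u v = 0 -> dot3 u u *: v = dot3 v u *: u.
Proof.
by move=> uv0; apply/eqP; rewrite -subr_eq0 -cross3_crossl uv0 cross3_0l.
Qed.

Lemma orthogonal_cross3_parallel u v w :
  dot3 u w = 0 -> dot3 v w = 0 ->
  let m := cross3 u v in dot3 m m *: w = dot3 w m *: m.
Proof.
move=> uw0 vw0 m; apply: cross3_eq0_parallel.
by rewrite cross3_crossl uw0 vw0 !scale0r subrr.
Qed.

End Coordinates.

Lemma dot3_self_eq0 (R : realFieldType) (u : 'rV[R]_3) : (dot3 u u == 0) = (u == 0).
Proof.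
apply/idP/eqP => [|->]; last by rewrite dot3E !mxE !mulr0 !addr0.
rewrite dot3E -!expr2 paddr_eq0 ?addr_ge0 ?sqr_ge0 // paddr_eq0 ?sqr_ge0 //.
rewrite !sqrf_eq0 => /andP[/andP[/eqP u0 /eqP u1] /eqP u2].
by apply: row3_eq; rewrite mxE.
Qed.

Lemma omega_affine_change (R : fieldType) (p1 p2 p3 p4 q3 q4 : 'rV[R]_3)
    (l l' mu mu' : R) :
  l != 0 -> l' != 0 ->
  q3 - p1 = l *: (p3 - p1) + mu *: (p2 - p1) ->
  q4 - p1 = l' *: (p4 - p1) + mu' *: (p2 - p1) ->
  omega p1 p2 q3 q4 = omega p1 p2 p3 p4.
Proof.
move=> l_neq0 l'_neq0 q3E q4E; rewrite /omega.
have -> : det3 (p2 - p1) (q3 - p1) (q4 - p1)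
          = l * l' * det3 (p2 - p1) (p3 - p1) (p4 - p1).
  by rewrite q3E q4E !det3E !mxE; ring.
have -> : det3 p1 p2 q3 = l * det3 p1 p2 p3.
  by rewrite -(subrK p1 q3) q3E !det3E !mxE; ring.
have -> : det3 p1 p2 q4 = l' * det3 p1 p2 p4.
  by rewrite -(subrK p1 q4) q4E !det3E !mxE; ring.
by rewrite mulrACA -mulf_div divff ?mul1r // mulf_neq0.
Qed.

Section PlanePencil.
Variable R : realFieldType.
Variables (n1 n2 a b : 'rV[R]_3) (c1 c2 : R).
Hypotheses (a_neq_b : a != b) (n1_neq0 : n1 != 0) (n2_neq0 : n2 != 0).
Hypothesis planes_distinct : exists x, ~ (plane n1 c1 x <-> plane n2 c2 x).
Hypotheses (a_in1 : plane n1 c1 a) (b_in1 : plane n1 c1 b).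
Hypotheses (a_in2 : plane n2 c2 a) (b_in2 : plane n2 c2 b).

Lemma cross3_normals_neq0 : cross3 n1 n2 != 0.
Proof.
apply/eqP => /cross3_eq0_parallel n2_par.
have n1n1_neq0 : dot3 n1 n1 != 0 by rewrite dot3_self_eq0.
set k := dot3 n2 n1 / dot3 n1 n1.
have n2E : n2 = k *: n1.
  by apply: (scalerI n1n1_neq0); rewrite n2_par scalerA mulrC divfK.
have k_neq0 : k != 0 by apply: contraNneq n2_neq0 => k0; rewrite n2E k0 scale0r.
have c2E : c2 = k * c1 by rewrite -a_in2 -a_in1 n2E dot3Zl.
case: planes_distinct => x; apply; apply: iff_sym.
by rewrite /plane n2E c2E dot3Zl; split => [/(mulfI k_neq0)|->].
Qed.

Lemma orthogonal_normals_parallel w :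
  dot3 n1 w = 0 -> dot3 n2 w = 0 -> exists t, w = t *: (b - a).
Proof.
move=> n1w0 n2w0; set m := cross3 n1 n2.
have mm_neq0 : dot3 m m != 0 by rewrite dot3_self_eq0 cross3_normals_neq0.
have n1d0 : dot3 n1 (b - a) = 0 by rewrite dot3B b_in1 a_in1 subrr.
have n2d0 : dot3 n2 (b - a) = 0 by rewrite dot3B b_in2 a_in2 subrr.
have d_par := orthogonal_cross3_parallel n1d0 n2d0.
have w_par := orthogonal_cross3_parallel n1w0 n2w0.
have dm_neq0 : dot3 (b - a) m != 0.
  apply: contraNneq a_neq_b => dm0; rewrite eq_sym -subr_eq0.
  by apply/eqP/(scalerI mm_neq0); rewrite d_par dm0 !scale0r scaler0.
exists (dot3 w m / dot3 (b - a) m); apply: (scalerI mm_neq0).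
by rewrite w_par scalerA mulrC -scalerA d_par scalerA divfK.
Qed.

Lemma plane_pencil_decomposition x y :
  plane n1 c1 x -> ~ plane n2 c2 x -> plane n1 c1 y -> ~ plane n2 c2 y ->
  exists l mu, l != 0 /\ y - a = l *: (x - a) + mu *: (b - a).
Proof.
move=> x_in1 x_notin2 y_in1 y_notin2.
set s := dot3 n2 x - c2; set s' := dot3 n2 y - c2.
have s_neq0 : s != 0 by rewrite subr_eq0; apply/eqP.
have s'_neq0 : s' != 0 by rewrite subr_eq0; apply/eqP.
pose w := y - a - s' / s *: (x - a).
have n1w0 : dot3 n1 w = 0.
  by rewrite !(dot3B, dot3Z) x_in1 y_in1 a_in1 !subrr mulr0 subrr.
have n2w0 : dot3 n2 w = 0 by rewrite !(dot3B, dot3Z) a_in2 -/s -/s' divfK // subrr.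
have [mu muE] := orthogonal_normals_parallel n1w0 n2w0.
exists (s' / s), mu; split; first by rewrite mulf_neq0 ?invr_eq0.
by rewrite -muE /w [RHS]addrC subrK.
Qed.

End PlanePencil.

Theorem proposition2p2 (R : realFieldType) (p1 p2 : 'rV[R]_3)
  (n1 n2 : 'rV[R]_3) (c1 c2 : R) :
  p1 != p2 ->
  n1 != 0 -> n2 != 0 ->
  (* the two planes are distinct *)
  (exists x, ~ (plane n1 c1 x <-> plane n2 c2 x)) ->
  (* both contain p1 and p2 *)
  plane n1 c1 p1 -> plane n1 c1 p2 -> plane n2 c2 p1 -> plane n2 c2 p2 ->
  (* neither passes through the origin *)
  ~ plane n1 c1 0 -> ~ plane n2 c2 0 ->
  forall p3 p4 q3 q4 : 'rV[R]_3,
    plane n1 c1 p3 -> ~ plane n2 c2 p3 ->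
    plane n2 c2 p4 -> ~ plane n1 c1 p4 ->
    plane n1 c1 q3 -> ~ plane n2 c2 q3 ->
    plane n2 c2 q4 -> ~ plane n1 c1 q4 ->
    omega p1 p2 p3 p4 = omega p1 p2 q3 q4.
Proof.
move=> p1_neq_p2 n1_neq0 n2_neq0 distinct12 p1_in1 p2_in1 p1_in2 p2_in2 _ _.
move=> p3 p4 q3 q4 p3_in1 p3_notin2 p4_in2 p4_notin1 q3_in1 q3_notin2 q4_in2 q4_notin1.
have distinct21 : exists x, ~ (plane n2 c2 x <-> plane n1 c1 x).
  by case: distinct12 => x x_sep; exists x => sep; exact: x_sep (iff_sym sep).
have [l [mu [l_neq0 q3E]]] := plane_pencil_decomposition p1_neq_p2 n1_neq0
  n2_neq0 distinct12 p1_in1 p2_in1 p1_in2 p2_in2 p3_in1 p3_notin2 q3_in1 q3_notin2.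
have [l' [mu' [l'_neq0 q4E]]] := plane_pencil_decomposition p1_neq_p2 n2_neq0
  n1_neq0 distinct21 p1_in2 p2_in2 p1_in1 p2_in1 p4_in2 p4_notin1 q4_in2 q4_notin1.
by rewrite (omega_affine_change l_neq0 l'_neq0 q3E q4E).
Qed.
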